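(* Let $G\cong\mathbb{R}^{d_1}\times\mathbb{R}^{d_2}$ be a 2-step stratified group with sub-Laplacian $\mathcal{L}$, with $\Omega$, $\phi$, $\phi_*$, $\mathfrak{l}_{\mathbf{y}}$, $\bar{\mathfrak{l}}_{\mathbf{y}}$ and $\Xi$ as defined below. For all $t\in\mathbb{R}$ and $(\mathbf{x},\mathbf{y},\boldsymbol{\xi})$ with $\mathbf{x}\in G$ and $(\mathbf{y},\boldsymbol{\xi})\in\Xi$, \[ \phi_*(t,\mathbf{x},\mathbf{y},\boldsymbol{\xi})=\phi(t,\mathfrak{l}_{\mathbf{y}}^{-1}\mathbf{x},\bar{\mathfrak{l}}_{\mathbf{y}}^{-1}\boldsymbol{\xi}). \]
   Context: $G$ is a 2-step stratified Lie group identified via exponential coordinates with $\mathbb{R}^{d_1}_x\times\mathbb{R}^{d_2}_u$, group law $(y,v)\cdot(x,u)=(y+x,v+u+[y,x]/2)$, coordinates on $\mathfrak{g}_1$ orthonormal for the inner product $\langle\cdot,\cdot\rangle$ making the vector fields $X_j$ of $\mathcal{L}=-\sum X_j^2$ orthonormal; $\mathbf{x}=(x,u)$, $\boldsymbol{\xi}=(\xi,\mu)$. $J_\mu$ is the skew-symmetric matrix with $\langle J_\mu x,x'\rangle=\mu\cdot[x,x']$, $|J_\mu|=(-J_\mu^2)^{1/2}$, and $\Omega$ is the set of $\mu$ where $\operatorname{rk}J_\mu$ is maximal. $\mathcal{H}(\mathbf{x},\boldsymbol{\xi})=|\xi+J_\mu x/2|$; for $(\mathbf{y},\boldsymbol{\xi})$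 with $\xi+J_\mu y/2\neq0$, $t\mapsto(\mathbf{x}_*^t(\mathbf{y},\boldsymbol{\xi}),\boldsymbol{\xi}_*^t(\mathbf{y},\boldsymbol{\xi}))$ is the solution of $\dot{\mathbf{x}}=\nabla_{\boldsymbol{\xi}}\mathcal{H}$, $\dot{\boldsymbol{\xi}}=-\nabla_{\mathbf{x}}\mathcal{H}$ with initial datum $(\mathbf{y},\boldsymbol{\xi})$, and $\mathbf{x}^t(\boldsymbol{\xi})=\mathbf{x}_*^t(0,\boldsymbol{\xi})$, $\boldsymbol{\xi}^t(\boldsymbol{\xi})=\boldsymbol{\xi}_*^t(0,\boldsymbol{\xi})$. Define $\phi(t,\mathbf{x},\boldsymbol{\xi})=(\mathbf{x}-\mathbf{x}^t(\boldsymbol{\xi}))\cdot\boldsymbol{\xi}^t(\boldsymbol{\xi})+\frac{i}{4}\langle|J_\mu|(x-x^t(\boldsymbol{\xi})),x-x^t(\boldsymbol{\xi})\rangle$ and $\phi_*(t,\mathbf{x},\mathbf{y},\boldsymbol{\xi})=(\mathbf{x}-\mathbf{x}_*^t(\mathbf{y},\boldsymbol{\xi}))\cdot\boldsymbol{\xi}_*^t(\mathbf{y},\boldsymbol{\xi})+\frac{i}{4}\langle|J_\mu|(x-x_*^t(\mathbf{y},\boldsymbol{\xi})),x-x_*^t(\mathbf{y},\boldsymbol{\xi})\rangle$ (where $x^t$, $x_*^t$ are first-layer components). $\mathfrak{l}_{\mathbf{y}}(\mathbf{x})=\mathbf{y}\cdot\mathbf{x}$ is left translation, and $\bar{\mathfrak{l}}_{\mathbf{y}}(\xi,\mu)=(\xi-J_\mu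 y/2,\mu)$ for $\mathbf{y}=(y,v)$. $\Xi_{\mathbf{y}}=\bar{\mathfrak{l}}_{\mathbf{y}}((\mathbb{R}^{d_1}\setminus\{0\})\times\Omega)$ and $\Xi=\bigcup_{\mathbf{y}\in G}\{\mathbf{y}\}\times\Xi_{\mathbf{y}}$. *)

From HB Require Import structures.
From mathcomp Require Import all_boot all_order all_algebra.
From mathcomp Require Import all_classical all_reals all_analysis.
From mathcomp Require Import complex.

Set Implicit Arguments.
Unset Strict Implicit.
Unset Printing Implicit Defensive.

Import Order.TTheory GRing.Theory Num.Theory.
Import numFieldNormedType.Exports.
Local Open Scope ring_scope.
Local Open Scope complex_scope.

Section Defs.
Variables (R : realType) (d1 d2 : nat).
(* The bracket [.,.] : g1 x g1 -> g2 in orthonormal coordinates: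
   [x,x']_k = x *m B k *m x'^T, with each B k skew-symmetric. *)
Variable B : 'I_d2 -> 'M[R]_d1.

Definition dotv n (a b : 'rV[R]_n) : R := \sum_i a 0 i * b 0 i.
Definition enorm n (a : 'rV[R]_n) : R := Num.sqrt (dotv a a).

Definition bracket (x x' : 'rV[R]_d1) : 'rV[R]_d2 :=
  \row_k (x *m B k *m x'^T) 0 0.

(* 2-step stratified: B k skew, d2 > 0, and [g1,g1] spans g2
   (equivalently: no nonzero mu annihilates all brackets). *)
Definition stratified2 : Prop :=
  (0 < d2)%N /\ (forall k, (B k)^T = - B k) /\
  (forall mu : 'rV[R]_d2, (forall x x', dotv mu (bracket x x') = 0) -> mu = 0).

Definition gmul (y : 'rV[R]_d1 * 'rV[R]_d2) (x : 'rV[R]_d1 * 'rV[R]_d2) :=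
  (y.1 + x.1, y.2 + x.2 + 2^-1 *: bracket y.1 x.1).
Definition ginv (y : 'rV[R]_d1 * 'rV[R]_d2) := (- y.1, - y.2).
Definition ltrans y x := gmul y x.
Definition ltrans_inv y x := gmul (ginv y) x.

(* J_mu : matrix acting on column vectors with <J_mu x, x'> = mu.[x,x'] *)
Definition Jmat (mu : 'rV[R]_d2) : 'M[R]_d1 := \sum_k (mu 0 k) *: (B k)^T.
Definition Japp (mu : 'rV[R]_d2) (x : 'rV[R]_d1) : 'rV[R]_d1 :=
  (Jmat mu *m x^T)^T.


Definition is_psd_sqrt (M S : 'M[R]_d1) : Prop :=
  S^T = S /\ (forall w : 'rV[R]_d1, 0 <= (w *m S *m w^T) 0 0) /\ S *m S = M.
Definition absJ (mu : 'rV[R]_d2) : 'M[R]_d1 :=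
  match pselect (exists S, is_psd_sqrt (- (Jmat mu *m Jmat mu)) S) with
  | left h => projT1 (cid h)
  | right _ => 0
  end.

Definition Omega : set 'rV[R]_d2 :=
  [set mu | forall mu', (\rank (Jmat mu') <= \rank (Jmat mu))%N].

Definition lbar (y : 'rV[R]_d1) (p : 'rV[R]_d1 * 'rV[R]_d2) :=
  (p.1 - 2^-1 *: Japp p.2 y, p.2).
Definition lbar_inv (y : 'rV[R]_d1) (p : 'rV[R]_d1 * 'rV[R]_d2) :=
  (p.1 + 2^-1 *: Japp p.2 y, p.2).

Definition inXi (y : 'rV[R]_d1 * 'rV[R]_d2) (p : 'rV[R]_d1 * 'rV[R]_d2) : Prop :=
  exists eta nu, eta != 0 /\ Omega nu /\ p = lbar y.1 (eta, nu).

Definition Ham (x : 'rV[R]_d1) (u : 'rV[R]_d2) (xi : 'rV[R]_d1) (mu : 'rV[R]_d2) : R :=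
  enorm (xi + 2^-1 *: Japp mu x).

Definition has_partial n (g : 'rV[R]_n -> R) (p : 'rV[R]_n) (i : 'I_n) (a : R) : Prop :=
  is_derive (0 : R) (1 : R) (fun s : R => g (p + s *: delta_mx 0 i)) a.

Definition ham_sol (y : 'rV[R]_d1 * 'rV[R]_d2) (p : 'rV[R]_d1 * 'rV[R]_d2)
  (X : R -> 'rV[R]_d1) (U : R -> 'rV[R]_d2) (Xi : R -> 'rV[R]_d1) (M : R -> 'rV[R]_d2) : Prop :=
  [/\ X 0 = y.1, U 0 = y.2, Xi 0 = p.1, M 0 = p.2 &
  forall t : R,
   [/\ forall i : 'I_d1, exists a,
         has_partial (fun z => Ham (X t) (U t) z (M t)) (Xi t) i a /\
         is_derive t (1 : R) (fun s => X s 0 i) a,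
       forall k : 'I_d2, exists a,
         has_partial (fun z => Ham (X t) (U t) (Xi t) z) (M t) k a /\
         is_derive t (1 : R) (fun s => U s 0 k) a,
       forall i : 'I_d1, exists a,
         has_partial (fun z => Ham z (U t) (Xi t) (M t)) (X t) i a /\
         is_derive t (1 : R) (fun s => Xi s 0 i) (- a) &
       forall k : 'I_d2, exists a,
         has_partial (fun z => Ham (X t) z (Xi t) (M t)) (U t) k a /\
         is_derive t (1 : R) (fun s => M s 0 k) (- a)]].

(* phi_* (t, x, y, xi) built from the flow values at time t:
   (x - x_*^t).xi_*^t + i/4 <|J_mu|(x - x_*^t), x - x_*^t>, where the
   first-layer component is used in the quadratic term and mu is the
   second component of the initial covector xi. *)
Definition phase (mu : 'rV[R]_d2) (x : 'rV[R]_d1 * 'rV[R]_d2)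
  (Xt : 'rV[R]_d1) (Ut : 'rV[R]_d2) (Xit : 'rV[R]_d1) (Mt : 'rV[R]_d2) : R[i] :=
  let w := x.1 - Xt in
  (dotv w Xit + dotv (x.2 - Ut) Mt) +i*
  (4^-1 * (w *m absJ mu *m w^T) 0 0).

End Defs.

(* Write P = xi + J_mu x / 2, so that H = |P|.  Along a bicharacteristic mu is
   constant (H does not depend on u), P never vanishes (|.| is not
   differentiable at 0), and P' = J_mu P / |P|; as J_mu is skew, |P| is
   conserved, so the flows starting at (y, lbar_y xi) and at (0, xi) have the
   same P for all times: their difference solves a linear skew ODE and starts
   at 0.  Then x' = P / |P| and xi' = J_mu P / (2|P|) give x = y + x_0 and
   xi = xi_0 - J_mu y / 2, while u' = <P, J_{e_k} x> / (2|P|) gives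
   u = v + u_0 + [y, x_0] / 2, i.e. the flow from (y, lbar_y xi) is the left
   translate by y of the flow from (0, xi).  Substituted into phi_*, the
   corrections -J_mu y / 2 and [y, x_0] / 2 combine with the group law in
   l_y^{-1} x and cancel by skew-symmetry of the bracket. *)
From HB Require Import structures.
From mathcomp Require Import all_boot all_order all_algebra.
From mathcomp Require Import all_classical all_reals all_analysis.
From mathcomp Require Import complex.
From mathcomp Require Import ring lra.
Set Implicit Arguments.
Unset Strict Implicit.
Unset Printing Implicit Defensive.
Import Order.TTheory GRing.Theory Num.Theory.
Import numFieldNormedType.Exports.
Local Open Scope ring_scope.

Section Dotv.
Variable R : realType.

Lemma dotvE n (a b : 'rV[R]_n) : dotv a b = (a *m b^T) 0 0.
Proof. by rewrite /dotv !mxE; apply: eq_bigr => i _; rewrite mxE. Qed.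

Lemma dotvC n (a b : 'rV[R]_n) : dotv a b = dotv b a.
Proof. by apply: eq_bigr => i _; rewrite mulrC. Qed.

Lemma dotvDl n (a b c : 'rV[R]_n) : dotv (a + b) c = dotv a c + dotv b c.
Proof. by rewrite /dotv -big_split; apply: eq_bigr => i _; rewrite mxE mulrDl. Qed.

Lemma dotvDr n (a b c : 'rV[R]_n) : dotv c (a + b) = dotv c a + dotv c b.
Proof. by rewrite dotvC dotvDl !(dotvC c). Qed.

Lemma dotvZl n k (a b : 'rV[R]_n) : dotv (k *: a) b = k * dotv a b.
Proof. by rewrite /dotv mulr_sumr; apply: eq_bigr => i _; rewrite mxE mulrA. Qed.

Lemma dotvZr n k (a b : 'rV[R]_n) : dotv a (k *: b) = k * dotv a b.
Proof. by rewrite dotvC dotvZl dotvC. Qed.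

Lemma dotvNl n (a b : 'rV[R]_n) : dotv (- a) b = - dotv a b.
Proof. by rewrite -scaleN1r dotvZl mulN1r. Qed.

Lemma dotvNr n (a b : 'rV[R]_n) : dotv a (- b) = - dotv a b.
Proof. by rewrite dotvC dotvNl dotvC. Qed.

Lemma dotvBr n (a b c : 'rV[R]_n) : dotv c (a - b) = dotv c a - dotv c b.
Proof. by rewrite dotvDr dotvNr. Qed.

Lemma dotv0l n (b : 'rV[R]_n) : dotv 0 b = 0.
Proof. by rewrite /dotv big1 // => i _; rewrite mxE mul0r. Qed.

Lemma dotv0r n (b : 'rV[R]_n) : dotv b 0 = 0.
Proof. by rewrite dotvC dotv0l. Qed.

Lemma dotv_sumr n I (r : seq I) (P : pred I) (a : 'rV[R]_n) (F : I -> 'rV[R]_n) :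
  dotv a (\sum_(i <- r | P i) F i) = \sum_(i <- r | P i) dotv a (F i).
Proof. by elim/big_rec2: _ => [|i b c _ <-]; rewrite ?dotv0r ?dotvDr. Qed.

Lemma dotvv_ge0 n (a : 'rV[R]_n) : 0 <= dotv a a.
Proof. by rewrite sumr_ge0 // => i _; rewrite -expr2 sqr_ge0. Qed.

Lemma dotvv_eq0 n (a : 'rV[R]_n) : (dotv a a == 0) = (a == 0).
Proof.
apply/idP/eqP => [|->]; last by rewrite dotv0l.
rewrite psumr_eq0 => [/allP a0|i _]; last by rewrite -expr2 sqr_ge0.
apply/rowP => i; have /(_ (mem_index_enum i)) := a0 i.
by rewrite mulf_eq0 orbb mxE => /eqP.
Qed.

Lemma dotv_delta n (a : 'rV[R]_n) i : dotv a (delta_mx 0 i) = a 0 i.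
Proof.
rewrite /dotv (bigD1 i) //= big1 ?addr0; first by rewrite mxE !eqxx mulr1.
by move=> j /negbTE ji; rewrite mxE ji andbF mulr0.
Qed.

Lemma enorm_gt0 n (a : 'rV[R]_n) : a != 0 -> 0 < enorm a.
Proof. by move=> a0; rewrite sqrtr_gt0 lt_def dotvv_ge0 dotvv_eq0 a0. Qed.

Lemma enorm_scale_delta n (i : 'I_n) (s : R) : enorm (s *: delta_mx 0 i) = `|s|.
Proof. by rewrite /enorm dotvZl dotvZr dotv_delta mxE !eqxx mulr1 -expr2 sqrtr_sqr. Qed.

End Dotv.

Section RealDerivative.
Variable R : realType.
Local Open Scope classical_set_scope.

Lemma is_derive_unique (f : R -> R) (x a b : R) :
  is_derive x 1 f a -> is_derive x 1 f b -> a = b.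
Proof. by move=> [_ <-] [_ <-]. Qed.

Lemma is_derive_mul (f g : R -> R) (x a b : R) :
  is_derive x 1 f a -> is_derive x 1 g b ->
  is_derive x 1 (fun s => f s * g s) (f x * b + g x * a).
Proof. by move=> df dg; have [? E] := is_deriveM df dg; split. Qed.

Lemma is_derive_sumr n (f : 'I_n -> R -> R) (x : R) (a : 'I_n -> R) :
  (forall i, is_derive x 1 (f i) (a i)) ->
  is_derive x 1 (fun s => \sum_i f i s) (\sum_i a i).
Proof. by move=> df; have := is_derive_sum df; rewrite fct_sumE. Qed.

Lemma not_is_derive_normr0 (a : R) : ~ is_derive (0 : R) 1 (Num.norm : R -> R) a.
Proof.
move=> [dn Da]; rewrite /derive in Da.
pose q h := h^-1 *: ((Num.norm \o shift (0 : R)) (h *: 1) - `|0 : R|).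
have qE h : q h = h^-1 * `|h| by rewrite /q /= scaler1 addr0 normr0 subr0.
have right1 : lim (q @ at_right 0) = 1.
  apply: norm_lim_near_cst; near=> h.
  have hp : 0 < h by near: h; exact: nbhs_right_gt.
  by rewrite qE gtr0_norm // mulVf // gt_eqF.
have leftN1 : lim (q @ at_left 0) = -1.
  apply: norm_lim_near_cst; near=> h.
  have hn : h < 0 by near: h; exact: nbhs_left_lt.
  by rewrite qE ltr0_norm // mulrN mulVf // lt_eqF.
have := cvg_at_rightE _ _ dn; have := cvg_at_leftE _ _ dn.
rewrite -/q Da right1 leftN1 => -> /eqP; lra.
Unshelve. all: by end_near. Qed.

Lemma is_derive_enorm n (p v : 'rV[R]_n) : p != 0 ->
  is_derive (0 : R) 1 (fun s : R => enorm (p + s *: v)) (dotv p v / enorm p).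
Proof.
move=> p0; have pp_gt0 : 0 < dotv p p by rewrite -sqrtr_gt0 enorm_gt0.
have dpp : is_derive (0 : R) 1 (fun s : R => dotv (p + s *: v) (p + s *: v))
    (dotv p v + dotv p v).
  rewrite /dotv -big_split /=; apply: is_derive_sumr => i.
  have dpi : is_derive (0 : R) 1 (fun s : R => (p + s *: v) 0 i) (v 0 i).
    under eq_fun do rewrite !mxE.
    have [? E] := is_deriveD (is_derive_cst (p 0 i) (0 : R) (1 : R))
      (is_derive_mul (is_derive_id (0 : R) (1 : R)) (is_derive_cst (v 0 i) (0 : R) (1 : R))).
    by split => //; rewrite E /= mul0r mulr1 !add0r.
  by have [? E] := is_derive_mul dpi dpi; split => //; rewrite E !mxE mul0r addr0.
have dsqrt : is_derive (dotv (p + 0 *: v) (p + 0 *: v)) 1 Num.sqrt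
    (2 * Num.sqrt (dotv p p))^-1.
  by rewrite scale0r addr0; exact: is_derive1_sqrt.
have [? E] := is_derive1_comp dsqrt dpp; split => //; rewrite E /enorm.
have sq0 : Num.sqrt (dotv p p) != 0 by rewrite gt_eqF // sqrtr_gt0.
by field.
Qed.

End RealDerivative.

Lemma is_derive_enorm_unique (R : realType) n (p v : 'rV[R]_n) (f : R -> R) a :
  f =1 (fun s => enorm (p + s *: v)) -> p != 0 -> is_derive (0 : R) 1 f a ->
  a = dotv p v / enorm p.
Proof. by move=> /funext -> p0 /is_derive_unique; apply; exact: is_derive_enorm. Qed.

Lemma row_neq0_dim_gt0 (R : realType) n (a : 'rV[R]_n) : a != 0 -> (0 < n)%N.
Proof.
rewrite lt0n; apply: contra_neq => n0; apply/rowP => i.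
by have := ltn_ord i; rewrite [X in (_ < X)%N]n0.
Qed.

Definition is_derive_rV (R : realType) n (F : R -> 'rV[R]_n) (t : R) (a : 'rV[R]_n) :=
  forall i, is_derive t 1 (fun s => F s 0 i) (a 0 i).

Section RowDerivative.
Variables (R : realType) (n : nat).
Implicit Types (F G : R -> 'rV[R]_n) (a b : 'rV[R]_n) (t : R).

Lemma is_derive_rVD F G t a b : is_derive_rV F t a -> is_derive_rV G t b ->
  is_derive_rV (fun s => F s + G s) t (a + b).
Proof.
move=> dF dG i; rewrite mxE; under eq_fun do rewrite mxE.
exact: (is_deriveD (dF i) (dG i)).
Qed.

Lemma is_derive_rV_cst a t : is_derive_rV (fun=> a) t 0.
Proof. by move=> i; rewrite mxE; exact: is_derive_cst. Qed.

Lemma is_derive_rVZ k F t a : is_derive_rV F t a ->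
  is_derive_rV (fun s => k *: F s) t (k *: a).
Proof.
move=> dF i; rewrite mxE; under eq_fun do rewrite mxE.
exact: (is_deriveZ k (dF i)).
Qed.

Lemma is_derive_rVN F t a : is_derive_rV F t a -> is_derive_rV (fun s => - F s) t (- a).
Proof.
move=> dF i; rewrite mxE; under eq_fun do rewrite mxE.
exact: (is_deriveN (dF i)).
Qed.

Lemma is_derive_rVB F G t a b : is_derive_rV F t a -> is_derive_rV G t b ->
  is_derive_rV (fun s => F s - G s) t (a - b).
Proof. by move=> dF dG; apply: is_derive_rVD => //; apply: is_derive_rVN. Qed.

Lemma is_derive_rV_mulmx m F (A : 'M[R]_(n, m)) t a : is_derive_rV F t a ->
  is_derive_rV (fun s => F s *m A) t (a *m A).
Proof.
move=> dF j; rewrite mxE; under eq_fun do rewrite mxE.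
apply: is_derive_sumr => i; under eq_fun do rewrite mulrC; rewrite mulrC.
exact: (is_deriveZ (A i j) (dF i)).
Qed.

Lemma is_derive_dotv F G t a b : is_derive_rV F t a -> is_derive_rV G t b ->
  is_derive t 1 (fun s => dotv (F s) (G s)) (dotv a (G t) + dotv (F t) b).
Proof.
move=> dF dG; rewrite /dotv -big_split /=; apply: is_derive_sumr => i.
by have [? E] := is_derive_mul (dF i) (dG i); split; rewrite // E; ring.
Qed.

Lemma is_derive_rV0_cst F t : (forall s, is_derive_rV F s 0) -> F t = F 0.
Proof.
move=> dF; apply/rowP => i; apply: (@is_derive_0_is_cst _ (fun s => F s 0 i)) => s.
by have := dF s i; rewrite mxE.
Qed.

Lemma is_derive_rV_shift F G (a : R -> 'rV[R]_n) t :
  (forall s, is_derive_rV F s (a s)) -> (forall s, is_derive_rV G s (a s)) ->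
  F t = F 0 - G 0 + G t.
Proof.
move=> dF dG; apply/eqP; rewrite -subr_eq; apply/eqP.
apply: (is_derive_rV0_cst (F := fun s => F s - G s)) => s.
by rewrite -(subrr (a s)); apply: is_derive_rVB.
Qed.

End RowDerivative.

Section Bracket.
Variables (R : realType) (d1 d2 : nat) (B : 'I_d2 -> 'M[R]_d1).
Implicit Types (x z : 'rV[R]_d1) (mu : 'rV[R]_d2).

Lemma JmatT mu : (Jmat B mu)^T = \sum_k mu 0 k *: B k.
Proof.
apply/matrixP => i j; rewrite /Jmat mxE !summxE.
by apply: eq_bigr => k _; rewrite !mxE.
Qed.

Lemma JappE mu x : Japp B mu x = x *m (Jmat B mu)^T.
Proof. by rewrite /Japp trmx_mul trmxK. Qed.

Lemma JappDr mu x z : Japp B mu (x + z) = Japp B mu x + Japp B mu z.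
Proof. by rewrite !JappE mulmxDl. Qed.

Lemma JappZr mu k x : Japp B mu (k *: x) = k *: Japp B mu x.
Proof. by rewrite !JappE scalemxAl. Qed.

Lemma JappBr mu x z : Japp B mu (x - z) = Japp B mu x - Japp B mu z.
Proof. by rewrite JappDr -scaleN1r JappZr scaleN1r. Qed.

Lemma Japp0r mu : Japp B mu 0 = 0.
Proof. by rewrite JappE mul0mx. Qed.

Lemma JappDl mu mu' x : Japp B (mu + mu') x = Japp B mu x + Japp B mu' x.
Proof.
rewrite !JappE !JmatT -mulmxDr -big_split /=; congr (_ *m _).
by apply: eq_bigr => k _; rewrite mxE scalerDl.
Qed.

Lemma JappZl mu k x : Japp B (k *: mu) x = k *: Japp B mu x.
Proof.
rewrite !JappE !JmatT !mulmx_sumr scaler_sumr.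
by apply: eq_bigr => j _; rewrite mxE -scalerA !scalemxAr.
Qed.

Lemma is_derive_rV_Japp mu (F : R -> 'rV[R]_d1) t a : is_derive_rV F t a ->
  is_derive_rV (fun s => Japp B mu (F s)) t (Japp B mu a).
Proof. by under eq_fun do rewrite JappE; rewrite JappE; apply: is_derive_rV_mulmx. Qed.

Lemma bracketE x z k : bracket B x z 0 k = dotv (x *m B k) z.
Proof. by rewrite mxE dotvE. Qed.

Lemma bracketDr x z z' : bracket B x (z + z') = bracket B x z + bracket B x z'.
Proof. by apply/rowP => k; rewrite bracketE [RHS]mxE !bracketE dotvDr. Qed.

Lemma bracketNr x z : bracket B x (- z) = - bracket B x z.
Proof. by apply/rowP => k; rewrite bracketE [RHS]mxE !bracketE dotvNr. Qed.

Lemma bracketNl x z : bracket B (- x) z = - bracket B x z.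
Proof. by apply/rowP => k; rewrite bracketE [RHS]mxE !bracketE mulNmx dotvNl. Qed.

Lemma dotv_Japp mu x z : dotv z (Japp B mu x) = dotv mu (bracket B x z).
Proof.
rewrite JappE JmatT mulmx_sumr dotv_sumr [RHS]/dotv; apply: eq_bigr => k _.
by rewrite -scalemxAr dotvZr bracketE dotvC.
Qed.

Lemma dotv_Japp_delta k x z : dotv z (Japp B (delta_mx 0 k) x) = dotv (x *m B k) z.
Proof. by rewrite dotv_Japp dotvC dotv_delta bracketE. Qed.

Hypothesis skew : forall k, (B k)^T = - B k.

Lemma bracketC x z : bracket B x z = - bracket B z x.
Proof.
apply/rowP => k; rewrite [RHS]mxE !bracketE !dotvE.
have -> : (x *m B k *m z^T) 0 0 = ((x *m B k *m z^T)^T) 0 0 by rewrite [RHS]mxE.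
by rewrite !trmx_mul trmxK skew mulNmx mulmxN mulmxA mxE.
Qed.

Lemma bracketvv x : bracket B x x = 0.
Proof.
apply/eqP; have /eqP := bracketC x x; rewrite -addr_eq0 -mulr2n -scaler_nat.
by rewrite scaler_eq0 pnatr_eq0.
Qed.

Lemma dotv_Japp_self mu x : dotv x (Japp B mu x) = 0.
Proof. by rewrite dotv_Japp bracketvv dotv0r. Qed.

Lemma dotv_Japp_swap mu x z : dotv x (Japp B mu z) = - dotv z (Japp B mu x).
Proof. by rewrite !dotv_Japp bracketC dotvNr. Qed.

Lemma dotvv_skew_flow mu (F : R -> 'rV[R]_d1) (k : R -> R) t :
  (forall s, is_derive_rV F s (k s *: Japp B mu (F s))) ->
  dotv (F t) (F t) = dotv (F 0) (F 0).
Proof.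
move=> dF; apply: (@is_derive_0_is_cst _ (fun s => dotv (F s) (F s))) => s.
have := is_derive_dotv (dF s) (dF s).
by rewrite dotvZl dotvZr dotvC dotv_Japp_self mulr0 addr0.
Qed.

End Bracket.

Definition ham_vec (R : realType) d1 d2 (B : 'I_d2 -> 'M[R]_d1)
  (x xi : 'rV[R]_d1) (mu : 'rV[R]_d2) : 'rV[R]_d1 :=
  xi + 2^-1 *: Japp B mu x.

Section HamiltonianGradient.
Variables (R : realType) (d1 d2 : nat) (B : 'I_d2 -> 'M[R]_d1).
Variables (x xi : 'rV[R]_d1) (u mu : 'rV[R]_d2).
Let P := ham_vec B x xi mu.

Lemma has_partial_Ham_u k a : has_partial (fun z => Ham B x z xi mu) u k a -> a = 0.
Proof. by move/is_derive_unique; apply; exact: is_derive_cst. Qed.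

Lemma not_has_partial_Ham_xi i a :
  P = 0 -> ~ has_partial (fun z => Ham B x u z mu) xi i a.
Proof.
move=> P0 da; apply: (@not_is_derive_normr0 _ a).
suff <- : (fun s => Ham B x u (xi + s *: delta_mx 0 i) mu) = Num.norm by [].
apply/funext => s; rewrite -(enorm_scale_delta i s) /Ham addrAC.
by move: P0; rewrite /P /ham_vec => ->; rewrite add0r.
Qed.

Hypothesis P_neq0 : P != 0.

Lemma has_partial_Ham_xi i a : has_partial (fun z => Ham B x u z mu) xi i a ->
  a = (Ham B x u xi mu)^-1 * P 0 i.
Proof.
move/(is_derive_enorm_unique (p := P) (v := delta_mx 0 i)) => -> //.
  by rewrite dotv_delta mulrC.
by move=> s; rewrite /Ham addrAC.
Qed.

Lemma has_partial_Ham_mu k a : has_partial (fun z => Ham B x u xi z) mu k a ->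
  a = 2^-1 * dotv (x *m B k) P / Ham B x u xi mu.
Proof.
move/(is_derive_enorm_unique (p := P) (v := 2^-1 *: Japp B (delta_mx 0 k) x)) => -> //.
  by rewrite dotvZr dotv_Japp_delta.
by move=> s; rewrite /Ham JappDl JappZl scalerDr addrA !scalerA mulrC.
Qed.

Hypothesis skew : forall k, (B k)^T = - B k.

Lemma has_partial_Ham_x i a : has_partial (fun z => Ham B z u xi mu) x i a ->
  - a = ((Ham B x u xi mu)^-1 * 2^-1) * Japp B mu P 0 i.
Proof.
move/(is_derive_enorm_unique (p := P) (v := 2^-1 *: Japp B mu (delta_mx 0 i))) => -> //.
  by rewrite dotvZr dotv_Japp_swap // dotvC dotv_delta; ring.
by move=> s; rewrite /Ham JappDr JappZr scalerDr addrA !scalerA mulrC.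
Qed.

End HamiltonianGradient.

Section HamiltonianFlow.
Variables (R : realType) (d1 d2 : nat) (B : 'I_d2 -> 'M[R]_d1).
Hypotheses (skew : forall k, (B k)^T = - B k) (d1_gt0 : (0 < d1)%N).
Variables (y p : 'rV[R]_d1 * 'rV[R]_d2) (X Xi : R -> 'rV[R]_d1) (U M : R -> 'rV[R]_d2).
Hypothesis hs : ham_sol B y p X U Xi M.
Let P t := ham_vec B (X t) (Xi t) p.2.
Let c t := enorm (P t).

Lemma ham_sol_M t : M t = p.2.
Proof.
case: hs => _ _ _ <- dH; apply: is_derive_rV0_cst => s k; rewrite mxE.
by have [_ _ _ /(_ k) [a [/has_partial_Ham_u -> ]]] := dH s; rewrite oppr0.
Qed.

(* [|.|] is not differentiable at [0], so [x' = grad_xi H] forbids [P t = 0]. *)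
Lemma ham_sol_vec_neq0 t : P t != 0.
Proof.
apply/eqP => Pt0; case: hs => _ _ _ _ /(_ t) [/(_ (Ordinal d1_gt0)) [a [da _]] _ _ _].
by rewrite ham_sol_M in da; apply: not_has_partial_Ham_xi da.
Qed.

Lemma ham_sol_deriveX t : is_derive_rV X t ((c t)^-1 *: P t).
Proof.
case: hs => _ _ _ _ /(_ t) [dX _ _ _] i; have [a [da dXa]] := dX i.
by rewrite ham_sol_M in da; rewrite mxE -(has_partial_Ham_xi (ham_sol_vec_neq0 t) da).
Qed.

Lemma ham_sol_deriveXi t : is_derive_rV Xi t (((c t)^-1 * 2^-1) *: Japp B p.2 (P t)).
Proof.
case: hs => _ _ _ _ /(_ t) [_ _ dXi _] i; have [a [da dXia]] := dXi i.
rewrite ham_sol_M in da; rewrite mxE -(has_partial_Ham_x (ham_sol_vec_neq0 t) skew da).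
exact: dXia.
Qed.

Lemma ham_sol_deriveU (t : R) k :
  is_derive t 1 (fun s => U s 0 k) (2^-1 * dotv (X t *m B k) (P t) / c t).
Proof.
case: hs => _ _ _ _ /(_ t) [_ dU _ _]; have [a [da dUa]] := dU k.
by rewrite ham_sol_M in da; rewrite -(has_partial_Ham_mu (ham_sol_vec_neq0 t) da).
Qed.

Lemma ham_sol_derive_vec t : is_derive_rV P t ((c t)^-1 *: Japp B p.2 (P t)).
Proof.
have := is_derive_rVD (ham_sol_deriveXi t)
  (is_derive_rVZ (2^-1) (is_derive_rV_Japp B p.2 (ham_sol_deriveX t))).
have c_neq0 : c t != 0 by rewrite gt_eqF // enorm_gt0 // ham_sol_vec_neq0.
by rewrite JappZr scalerA -scalerDl (_ : _ + _ = (c t)^-1) //; field.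
Qed.

Lemma ham_sol_enorm_vec t : c t = c 0.
Proof. by rewrite /c /enorm (dotvv_skew_flow skew t ham_sol_derive_vec). Qed.

End HamiltonianFlow.

Lemma lbar_invK (R : realType) d1 d2 (B : 'I_d2 -> 'M[R]_d1) y :
  cancel (lbar B y) (lbar_inv B y).
Proof. by case=> xi mu; rewrite /lbar /lbar_inv /= subrK. Qed.

Section LeftTranslation.
Variables (R : realType) (d1 d2 : nat) (B : 'I_d2 -> 'M[R]_d1).
Hypotheses (skew : forall k, (B k)^T = - B k) (d1_gt0 : (0 < d1)%N).
Variables (y : 'rV[R]_d1 * 'rV[R]_d2) (eta : 'rV[R]_d1) (nu : 'rV[R]_d2).
Variables (X X0 Xi Xi0 : R -> 'rV[R]_d1) (U U0 M M0 : R -> 'rV[R]_d2).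
Hypotheses (hs : ham_sol B y (lbar B y.1 (eta, nu)) X U Xi M)
  (h0 : ham_sol B (0, 0) (eta, nu) X0 U0 Xi0 M0).
Let P t := ham_vec B (X t) (Xi t) nu.
Let P0 t := ham_vec B (X0 t) (Xi0 t) nu.

Lemma ham_vec_ltrans t : P t = P0 t.
Proof.
have [P_0 P0_0] : P 0 = eta /\ P0 0 = eta.
  rewrite /P /P0 /ham_vec; case: hs h0 => -> _ -> _ _ [-> _ -> _ _] /=.
  by rewrite Japp0r scaler0 addr0 subrK.
have cE s : enorm (P s) = enorm eta /\ enorm (P0 s) = enorm eta.
  split; [rewrite -P_0; exact: (ham_sol_enorm_vec skew d1_gt0 hs)|].
  by rewrite -P0_0; exact: (ham_sol_enorm_vec skew d1_gt0 h0).
apply/eqP; rewrite -subr_eq0 -dotvv_eq0.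
rewrite (dotvv_skew_flow skew (mu := nu) (k := fun=> (enorm eta)^-1)
  (F := fun s => P s - P0 s)) /=; first by rewrite P_0 P0_0 subrr dotv0l.
move=> s; rewrite JappBr scalerBr; apply: is_derive_rVB.
  by have := ham_sol_derive_vec skew d1_gt0 hs s; rewrite /= (cE s).1.
by have := ham_sol_derive_vec skew d1_gt0 h0 s; rewrite /= (cE s).2.
Qed.

Lemma ham_sol_ltransX t : X t = y.1 + X0 t.
Proof.
have [X_0 _ _ _ _] := hs; have [/= X0_0 _ _ _ _] := h0.
rewrite (is_derive_rV_shift t (ham_sol_deriveX d1_gt0 hs) (G := X0)).
  by rewrite X_0 X0_0 subr0.
move=> s; have := ham_vec_ltrans s; rewrite /P /P0 /= => ->.
exact: (ham_sol_deriveX d1_gt0 h0 s).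
Qed.

Lemma ham_sol_ltransXi t : Xi t = Xi0 t - 2^-1 *: Japp B nu y.1.
Proof.
have [_ _ Xi_0 _ _] := hs; have [_ _ /= Xi0_0 _ _] := h0.
rewrite (is_derive_rV_shift t (ham_sol_deriveXi skew d1_gt0 hs) (G := Xi0)).
  by rewrite Xi_0 Xi0_0 /= [eta - _ - eta]addrAC subrr add0r addrC.
move=> s; have := ham_vec_ltrans s; rewrite /P /P0 /= => ->.
exact: (ham_sol_deriveXi skew d1_gt0 h0 s).
Qed.

Lemma ham_sol_ltransU t : U t = y.2 + U0 t + 2^-1 *: bracket B y.1 (X0 t).
Proof.
have [_ U_0 _ _ _] := hs; have [/= X0_0 U0_0 _ _ _] := h0.
apply/rowP => k; rewrite [RHS]mxE [in RHS]mxE [in RHS]mxE bracketE.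
pose f s := U s 0 k - U0 s 0 k - 2^-1 * dotv (y.1 *m B k) (X0 s).
suff : f t = f 0 by rewrite /f U_0 U0_0 X0_0 dotv0r mxE; lra.
apply: (@is_derive_0_is_cst _ f) => s.
have dD := is_derive_dotv (is_derive_rV_cst (y.1 *m B k) s) (ham_sol_deriveX d1_gt0 h0 s).
apply: (is_derive_eq (is_deriveB (is_deriveB (ham_sol_deriveU d1_gt0 hs s k)
  (ham_sol_deriveU d1_gt0 h0 s k)) (is_deriveZ (2^-1) dD))).
have := ham_vec_ltrans s; rewrite /P /P0 /= => ->.
rewrite ham_sol_ltransX mulmxDl dotvDl dotv0l dotvZr add0r -[2^-1 *: _]/(2^-1 * _).
by ring.
Qed.

Lemma ham_sol_ltrans t :
  (X t, U t) = ltrans B y (X0 t, U0 t) /\ (Xi t, M t) = lbar B y.1 (Xi0 t, M0 t).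
Proof.
rewrite /ltrans /gmul /lbar /= ham_sol_ltransX ham_sol_ltransU ham_sol_ltransXi.
by rewrite (ham_sol_M hs) (ham_sol_M h0).
Qed.

End LeftTranslation.

Lemma phase_ltrans (R : realType) d1 d2 (B : 'I_d2 -> 'M[R]_d1) nu x y
    (z z0 : 'rV[R]_d1 * 'rV[R]_d2) (zeta zeta0 : 'rV[R]_d1) :
  (forall k, (B k)^T = - B k) ->
  z = ltrans B y z0 -> (zeta, nu) = lbar B y.1 (zeta0, nu) ->
  phase B nu x z.1 z.2 zeta nu = phase B nu (ltrans_inv B y x) z0.1 z0.2 zeta0 nu.
Proof.
move=> skew -> [->]; rewrite /phase /ltrans /ltrans_inv /gmul /ginv /=.
have -> : x.1 - (y.1 + z0.1) = - y.1 + x.1 - z0.1.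
  by rewrite opprD addrA [x.1 - y.1]addrC.
congr (_ +i* _)%C; rewrite dotvBr dotvZr dotv_Japp [dotv nu _]dotvC.
rewrite !bracketDr !bracketNr bracketvv // oppr0 add0r bracketNl.
by rewrite !(dotvDl, dotvNl, dotvZl); ring.
Qed.

Theorem proposition9p5 (R : realType) (d1 d2 : nat) (B : 'I_d2 -> 'M[R]_d1)
  (hG : stratified2 B)
  (t : R) (x y : 'rV[R]_d1 * 'rV[R]_d2) (xi : 'rV[R]_d1 * 'rV[R]_d2)
  (hXi : inXi B y xi)
  (Xs : R -> 'rV[R]_d1) (Us : R -> 'rV[R]_d2) (Xis : R -> 'rV[R]_d1) (Ms : R -> 'rV[R]_d2)
  (hs : ham_sol B y xi Xs Us Xis Ms)
  (X0 : R -> 'rV[R]_d1) (U0 : R -> 'rV[R]_d2) (Xi0 : R -> 'rV[R]_d1) (M0 : R -> 'rV[R]_d2)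
  (h0 : ham_sol B (0, 0) (lbar_inv B y.1 xi) X0 U0 Xi0 M0) :
  phase B xi.2 x (Xs t) (Us t) (Xis t) (Ms t)
  = phase B (lbar_inv B y.1 xi).2 (ltrans_inv B y x) (X0 t) (U0 t) (Xi0 t) (M0 t).
Proof.
have skew : forall k, (B k)^T = - B k by case: hG => _ [].
case: hXi => eta [nu [eta_neq0 [_ ->]]] in hs h0 *.
have d1_gt0 := row_neq0_dim_gt0 eta_neq0.
rewrite lbar_invK in h0 *.
have [XUE XiME] := ham_sol_ltrans skew d1_gt0 hs h0 t.
rewrite (ham_sol_M hs) (ham_sol_M h0) in XiME *.
exact: phase_ltrans skew XUE XiME.
Qed.
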